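(* Let $R$ be a ring and $M$, $N$ left $R$-modules with $\operatorname{char}(M)=a$ and $\operatorname{char}(N)=b$. (1) If $a$ and $b$ are positive and coprime, then $\operatorname{Ext}^1_R(N,M)=0$. (2) If $M$ is simple and $a=0\neq b$, then $\operatorname{Ext}^1_R(N,M)=0$. (3) If $M$ and $N$ are simple and $a\neq 0=b$, then $\operatorname{Ext}^1_R(N,M)=0$.
   Context: For an $R$-module $M$, the characteristic $\operatorname{char}(M)$ is defined to be the characteristic of the ring $\operatorname{End}_R(M)$. *)

From HB Require Import structures.
From mathcomp Require Import all_boot all_order all_algebra.
Set Implicit Arguments. Unset Strict Implicit. Unset Printing Implicit Defensive.
Import GRing.Theory.
Local Open Scope ring_scope.

(* Characteristic of a module M: the characteristic of the ring End_R(M).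
   In End_R(M), n%:R is the endomorphism x |-> x *+ n, so the characteristic
   is the natural number a with:  n%:R = 0 in End_R(M)  <->  a %| n. *)
Definition mod_char (R : pzRingType) (M : lmodType R) (a : nat) : Prop :=
  forall n : nat, (forall x : M, x *+ n = 0) <-> (a %| n)%N.

Definition submodule (R : pzRingType) (M : lmodType R) (S : M -> Prop) : Prop :=
  S 0 /\ (forall x y, S x -> S y -> S (x + y)) /\ (forall (r : R) x, S x -> S (r *: x)).

Definition simple_mod (R : pzRingType) (M : lmodType R) : Prop :=
  (exists x : M, x != 0) /\
  forall S : M -> Prop, submodule S -> (forall x, S x -> x = 0) \/ (forall x, S x).

(* Ext^1_R(N, M) = 0 (Yoneda description): every short exact sequence of
   left R-modules  0 -> M -f-> E -g-> N -> 0  splits. *)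
Definition ext1_zero (R : pzRingType) (N M : lmodType R) : Prop :=
  forall (E : lmodType R) (f : {linear M -> E}) (g : {linear E -> N}),
    injective f ->
    (forall y : N, exists e : E, g e = y) ->
    (forall e : E, g e = 0 <-> exists m : M, f m = e) ->
    exists s : {linear N -> E}, forall y : N, g (s y) = y.

From HB Require Import structures.
From mathcomp Require Import all_boot all_order all_algebra.
Set Implicit Arguments. Unset Strict Implicit. Unset Printing Implicit Defensive.
Import GRing.Theory.
Local Open Scope ring_scope.

(* In each case some n : nat either kills M and acts bijectively on N (case 1
   by Bezout, case 3 by Schur's lemma since char N = 0), or kills N and acts
   bijectively on M (case 2, by Schur's lemma).  In the first situation,
   multiplication by n on an extension E of N by M vanishes on M and induces
   an automorphism of N, so it descends to a section of E -> N; in the second,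
   n E lies in M, and dividing by n there gives a retraction of M -> E. *)

Definition linear_fun (R : pzRingType) (U V : lmodType R) (t : U -> V)
    (t_lin : linear t) : {linear U -> V} :=
  HB.pack t (GRing.isLinear.Build R U V *:%R t t_lin).

Lemma mulrn_linear (R : pzRingType) (V : lmodType R) (n : nat) :
  linear (fun x : V => x *+ n).
Proof. by move=> r x y; rewrite mulrnDl scalerMnr. Qed.

Lemma mod_char_mulrn (R : pzRingType) (M : lmodType R) (a : nat) :
  mod_char M a -> forall x : M, x *+ a = 0.
Proof. by move=> chM; apply/(chM a).2/dvdnn. Qed.

Lemma simple_linear_inj (R : pzRingType) (U V : lmodType R)
    (t : {linear U -> V}) :
  simple_mod U -> ~ (forall x, t x = 0) -> injective t.
Proof.
move=> [_ simU] t_neq0.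
have ker_sub : submodule (fun x => t x = 0).
  split; first exact: linear0.
  split=> [x y tx ty|r x tx]; first by rewrite linearD tx ty addr0.
  by rewrite linearZZ tx scaler0.
have [ker0|kerT] := simU _ ker_sub; last by case: t_neq0.
move=> x y /eqP; rewrite -subr_eq0 -linearB => /eqP/ker0/eqP.
by rewrite subr_eq0 => /eqP.
Qed.

Lemma simple_linear_surj (R : pzRingType) (U V : lmodType R)
    (t : {linear U -> V}) :
  simple_mod V -> ~ (forall x, t x = 0) -> forall y, exists x, t x = y.
Proof.
move=> [_ simV] t_neq0.
have im_sub : submodule (fun y => exists x, t x = y).
  split; first by exists 0; rewrite linear0.
  split=> [_ _ [x <-] [y <-]|r _ [x <-]]; first by exists (x + y); rewrite linearD.
  by exists (r *: x); rewrite linearZZ.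
have [im0|imT] := simV _ im_sub; last exact: imT.
by case: t_neq0 => x; apply: im0; exists x.
Qed.

Lemma simple_char0_mulrn_bij (R : pzRingType) (M : lmodType R) (n : nat) :
  simple_mod M -> mod_char M 0 -> n <> 0%N ->
  injective (fun x : M => x *+ n) /\ (forall y : M, exists x, x *+ n = y).
Proof.
move=> simM chM n_neq0.
have mulrn_neq0 : ~ (forall x : M, x *+ n = 0).
  by move=> /(chM n).1; rewrite dvd0n => /eqP.
pose t := linear_fun (@mulrn_linear _ M n).
by split; [apply: (@simple_linear_inj _ _ _ t) | apply: (@simple_linear_surj _ _ _ t)].
Qed.

Lemma mulrn_bij_coprime (R : pzRingType) (N : lmodType R) (a b : nat) :
  (forall y : N, y *+ b = 0) -> (0 < a)%N -> coprime a b ->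
  injective (fun y : N => y *+ a) /\ (forall y : N, exists x, x *+ a = y).
Proof.
move=> bN a_gt0 coprime_ab.
have [k l kaE _] := egcdnP b a_gt0.
have mulrn_ka (y : N) : y *+ (k * a) = y.
  by rewrite kaE (eqP coprime_ab) mulrnDr mulnC mulrnA bN mul0rn add0r.
split=> [x y xy | y]; last by exists (y *+ k); rewrite -mulrnA mulrn_ka.
by rewrite -[x]mulrn_ka -[y]mulrn_ka mulnC !mulrnA xy.
Qed.

Section SplitShortExactSequence.

Variables (R : pzRingType) (M N E : lmodType R).
Variables (f : {linear M -> E}) (g : {linear E -> N}).
Hypotheses (f_inj : injective f) (g_surj : forall y, exists e, g e = y).
Hypothesis ker_g : forall e, g e = 0 <-> exists m, f m = e.

Lemma split_of_endo (t : {linear E -> E}) (u : {linear N -> N}) :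
  (forall m, t (f m) = 0) -> (forall e, g (t e) = u (g e)) ->
  injective u -> (forall y, exists x, u x = y) ->
  exists s : {linear N -> E}, cancel s g.
Proof.
move=> tf0 gtu u_inj u_surj.
have gt_surj y : exists e, g (t e) == y.
  by have [x <-] := u_surj y; have [e <-] := g_surj x; exists e; rewrite gtu.
have t_eq e1 e2 : g (t e1) = g (t e2) -> t e1 = t e2.
  move=> gt12; have /u_inj/ker_g [m fm] : u (g (e1 - e2)) = u 0.
    by rewrite -gtu linear0 !linearB gt12 subrr.
  by apply/eqP; rewrite -subr_eq0 -linearB -fm tf0.
pose s y := t (xchoose (gt_surj y)).
have gsK : cancel s g by move=> y; apply/eqP/(xchooseP (gt_surj y)).
have s_lin : linear s.
  move=> r y z; rewrite /s -linearP; apply: t_eq.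
  by rewrite !linearP -!/(s _) !gsK.
by exists (linear_fun s_lin).
Qed.

Lemma section_of_retraction (p : {linear E -> M}) :
  cancel f p -> exists s : {linear N -> E}, cancel s g.
Proof.
move=> fK; have gf0 m : g (f m) = 0 by apply/ker_g; exists m.
apply: (@split_of_endo (idfun \- (f \o p)) idfun) => [m|e||y].
- by rewrite /= (fK m) subrr.
- by rewrite /= linearB /= gf0 subr0.
- exact: inj_id.
- by exists y.
Qed.

Lemma retraction_of_mulrn (n : nat) :
  (forall y : N, y *+ n = 0) -> injective (fun m : M => m *+ n) ->
  (forall m : M, exists m', m' *+ n = m) ->
  exists p : {linear E -> M}, cancel f p.
Proof.
move=> nN n_inj n_surj.
have ex e : exists m, f (m *+ n) == e *+ n.
  have /ker_g [m0 fm0] : g (e *+ n) = 0 by rewrite linearMn /= nN.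
  by have [m mn] := n_surj m0; exists m; rewrite mn fm0.
pose p e := xchoose (ex e).
have pP e : f (p e *+ n) = e *+ n by apply/eqP/(xchooseP (ex e)).
have p_eq e m : f (m *+ n) = e *+ n -> p e = m.
  by move=> fm; apply/n_inj/f_inj; rewrite pP fm.
have p_lin : linear p.
  move=> r x y; apply: p_eq.
  by rewrite mulrnDl scalerMnr linearP /= !pP -scalerMnr -mulrnDl.
by exists (linear_fun p_lin) => m; apply: p_eq; rewrite linearMn.
Qed.

Lemma split_of_mulrn (n : nat) :
  (forall m : M, m *+ n = 0) -> injective (fun y : N => y *+ n) ->
  (forall y : N, exists y', y' *+ n = y) ->
  exists s : {linear N -> E}, cancel s g.
Proof.
move=> nM n_inj n_surj.
apply: (@split_of_endo (linear_fun (@mulrn_linear _ E n))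
                       (linear_fun (@mulrn_linear _ N n))) => // [m|e] /=.
- by rewrite -linearMn /= nM linear0.
- exact: linearMn.
Qed.

End SplitShortExactSequence.

Lemma ext1_zero_of_mulrn_sub (R : pzRingType) (M N : lmodType R) (n : nat) :
  (forall m : M, m *+ n = 0) -> injective (fun y : N => y *+ n) ->
  (forall y : N, exists y', y' *+ n = y) -> ext1_zero N M.
Proof.
move=> nM n_inj n_surj E f g _ g_surj ker_g.
by have [s sK] := split_of_mulrn g_surj ker_g nM n_inj n_surj; exists s.
Qed.

Lemma ext1_zero_of_mulrn_quo (R : pzRingType) (M N : lmodType R) (n : nat) :
  (forall y : N, y *+ n = 0) -> injective (fun m : M => m *+ n) ->
  (forall m : M, exists m', m' *+ n = m) -> ext1_zero N M.
Proof.
move=> nN n_inj n_surj E f g f_inj g_surj ker_g.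
have [p fK] := retraction_of_mulrn f_inj ker_g nN n_inj n_surj.
by have [s sK] := section_of_retraction g_surj ker_g fK; exists s.
Qed.

Theorem mainTheorem4 (R : pzRingType) (M N : lmodType R) (a b : nat) :
  mod_char M a -> mod_char N b ->
  ((0 < a)%N -> (0 < b)%N -> coprime a b -> ext1_zero N M) /\
  (simple_mod M -> a = 0%N -> b <> 0%N -> ext1_zero N M) /\
  (simple_mod M -> simple_mod N -> a <> 0%N -> b = 0%N -> ext1_zero N M).
Proof.
move=> chM chN; split; [|split].
- move=> a_gt0 _ coprime_ab.
  have [a_inj a_surj] := mulrn_bij_coprime (mod_char_mulrn chN) a_gt0 coprime_ab.
  exact: ext1_zero_of_mulrn_sub (mod_char_mulrn chM) a_inj a_surj.
- move=> simM a0 b_neq0; subst a.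
  have [b_inj b_surj] := simple_char0_mulrn_bij simM chM b_neq0.
  exact: ext1_zero_of_mulrn_quo (mod_char_mulrn chN) b_inj b_surj.
- move=> _ simN a_neq0 b0; subst b.
  have [a_inj a_surj] := simple_char0_mulrn_bij simN chN a_neq0.
  exact: ext1_zero_of_mulrn_sub (mod_char_mulrn chM) a_inj a_surj.
Qed.
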